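(* Let $X,Y$ be real Hilbert spaces, $A\colon X\to Y$ compact linear with $\|A\|=1$, let $X_N\subset X$ be a linear subspace of dimension $N$, and $A_N=A|_{X_N}$. Let $\rho>0$, $C>0$, and assume: (i) $x^\dagger=A^\ast z\in X_N$ for some $z\in\operatorname{range}(A_N)$ with $\|z\|\le\rho$; (ii) for all $0<\alpha\le1$, the operator norm of $(\alpha I+A^\ast A)^{-1}A^\ast$ restricted to $\operatorname{range}(A_N)$ (as a map $\operatorname{range}(A_N)\to X$) is at most $CN$. Let $y^\dagger=Ax^\dagger$, $\delta\ge0$, and $y^\delta\in Y$ with $\|y^\delta-y^\dagger\|\le\delta$. Then for every $0<\alpha\le1$, $$\|T_\alpha y^\delta-x^\dagger\|\le\frac{\delta}{2\sqrt\alpha}+\begin{cases}\frac{\sqrt\alpha}{2}\rho&\text{if } \frac{1}{2CN}<\sqrt\alpha\le1,\\[1mm] \alpha CN\rho&\text{if }\sqrt\alpha\le\frac{1}{2CN}.\end{cases}$$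
   Context: $A^\ast$ denotes the adjoint of $A$ and $T_\alpha y=(A^\ast A+\alpha I)^{-1}A^\ast y$ is Tikhonov regularization with parameter $\alpha>0$. *)

From HB Require Import structures.
From Stdlib Require Import ClassicalEpsilon.
From mathcomp Require Import all_boot all_order all_algebra.
From mathcomp Require Import classical_sets reals.
Set Implicit Arguments. Unset Strict Implicit. Unset Printing Implicit Defensive.
Import Order.TTheory GRing.Theory Num.Theory.
Local Open Scope ring_scope.
Local Open Scope classical_set_scope.

Section Hilbert.
Variable R : realType.

Definition ipnorm (V : lmodType R) (ip : V -> V -> R) (x : V) : R :=
  Num.sqrt (ip x x).

Definition is_inner_product (V : lmodType R) (ip : V -> V -> R) : Prop :=
  [/\ (forall x y, ip x y = ip y x),
      (forall (a : R) x y z, ip (a *: x + y) z = a * ip x z + ip y z)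
    & (forall x, x != 0 -> 0 < ip x x)].

Definition ip_complete (V : lmodType R) (ip : V -> V -> R) : Prop :=
  forall u : nat -> V,
    (forall e : R, 0 < e -> exists n0 : nat, forall m n : nat,
        (n0 <= m)%N -> (n0 <= n)%N -> ipnorm ip (u m - u n) < e) ->
    exists l : V, forall e : R, 0 < e -> exists n0 : nat, forall n : nat,
        (n0 <= n)%N -> ipnorm ip (u n - l) < e.

Definition is_hilbert (V : lmodType R) (ip : V -> V -> R) : Prop :=
  is_inner_product ip /\ ip_complete ip.

Section Ops.
Variables (X Y : lmodType R) (ipX : X -> X -> R) (ipY : Y -> Y -> R).

Definition opnorm_on (S : set Y) (f : Y -> X) : R :=
  sup [set r : R | exists z, [/\ S z, ipnorm ipY z <= 1 & r = ipnorm ipX (f z)]].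

Definition opnorm (A : X -> Y) : R :=
  sup [set r : R | exists x, ipnorm ipX x <= 1 /\ r = ipnorm ipY (A x)].

Definition is_adjoint (A : X -> Y) (Astar : Y -> X) : Prop :=
  forall x y, ipY (A x) y = ipX x (Astar y).

(* compact operator: every bounded sequence is mapped to a sequence having a
   Cauchy (hence, Y being complete, convergent) subsequence, i.e. A maps bounded
   sets to relatively compact sets *)
Definition compact_op (A : X -> Y) : Prop :=
  forall u : nat -> X, (exists M : R, forall n, ipnorm ipX (u n) <= M) ->
  exists phi : nat -> nat, (forall n, (phi n < phi n.+1)%N) /\
    (forall e : R, 0 < e -> exists n0 : nat, forall m n : nat,
        (n0 <= m)%N -> (n0 <= n)%N -> ipnorm ipY (A (u (phi m)) - A (u (phi n))) < e).

Definition subspace_dim (XN : set X) (N : nat) : Prop :=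
  exists b : 'I_N -> X,
    (forall c : 'I_N -> R, \sum_(i < N) c i *: b i = 0 -> forall i, c i = 0) /\
    XN = [set x | exists c : 'I_N -> R, x = \sum_(i < N) c i *: b i].

Definition tikhonov (A : X -> Y) (Astar : Y -> X) (alpha : R) (y : Y) : X :=
  epsilon (inhabits (0 : X)) (fun x => Astar (A x) + alpha *: x = Astar y).

End Ops.
End Hilbert.

From HB Require Import structures.
From Stdlib Require Import ClassicalEpsilon.
From mathcomp Require Import all_boot all_order all_algebra.
From mathcomp Require Import boolp classical_sets reals.
From mathcomp Require Import ring lra.
Set Implicit Arguments. Unset Strict Implicit.
Import Order.TTheory GRing.Theory Num.Theory.
Local Open Scope ring_scope.
Local Open Scope classical_set_scope.

(* The Tikhonov functional [|A x - y|^2 + alpha |x|^2] attains its infimum: a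
   minimising sequence is Cauchy by the parallelogram law, and its limit is a
   minimiser because the functional is continuous.  A minimiser solves the normal
   equation [(A^* A + alpha) x = A^* y], whose solution is unique, so [T_alpha]
   is linear with [|T_alpha w| <= |w| / (2 sqrt alpha)] and
   [T_alpha (A A^* z) = A^* z - alpha T_alpha z].  Writing [x^dag = A^* z] and
   [w = y^delta - A x^dag] gives [T_alpha y^delta - x^dag = T_alpha w - alpha T_alpha z].
   The first term is at most [delta / (2 sqrt alpha)]; the second is bounded both by
   [sqrt alpha rho / 2] (same estimate) and by [alpha C N rho] (hypothesis (ii)), so
   the case split in the statement is immaterial. *)

Section InnerProduct.
Variables (R : realType) (V : lmodType R) (ip : V -> V -> R).
Hypothesis hip : is_inner_product ip.

Lemma ip_sym x y : ip x y = ip y x.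
Proof. by case: hip. Qed.

Lemma ip_linear a x y z : ip (a *: x + y) z = a * ip x z + ip y z.
Proof. by case: hip => _ h _; apply: h. Qed.

Lemma ip_gt0 x : x != 0 -> 0 < ip x x.
Proof. by case: hip => _ _; apply. Qed.

Lemma ip0l z : ip 0 z = 0.
Proof. by have := ip_linear 1 0 0 z; rewrite scaler0 addr0 mul1r; lra. Qed.

Lemma ipZl a x z : ip (a *: x) z = a * ip x z.
Proof. by have := ip_linear a x 0 z; rewrite addr0 ip0l addr0. Qed.

Lemma ipDl x y z : ip (x + y) z = ip x z + ip y z.
Proof. by have := ip_linear 1 x y z; rewrite scale1r mul1r. Qed.

Lemma ipZr a x z : ip z (a *: x) = a * ip z x.
Proof. by rewrite ip_sym ipZl ip_sym. Qed.

Lemma ipDr x y z : ip z (x + y) = ip z x + ip z y.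
Proof. by rewrite ip_sym ipDl !(ip_sym z). Qed.

Lemma ip_ge0 x : 0 <= ip x x.
Proof. by have [->|/ip_gt0/ltW] := eqVneq x 0; rewrite ?ip0l. Qed.

Lemma ip_eq0 x : ip x x = 0 -> x = 0.
Proof. by have [//|/ip_gt0] := eqVneq x 0; rewrite lt0r => /andP[/eqP]. Qed.

Lemma ip_combination a b x y : ip (a *: x + b *: y) (a *: x + b *: y) =
  a ^+ 2 * ip x x + 2 * a * b * ip x y + b ^+ 2 * ip y y.
Proof. by rewrite !ipDl !ipDr !ipZl !ipZr (ip_sym y x); ring. Qed.

Lemma ipD x y : ip (x + y) (x + y) = ip x x + 2 * ip x y + ip y y.
Proof. by have := ip_combination 1 1 x y; rewrite !scale1r => ->; ring. Qed.

Lemma cauchy_schwarz x y : ip x y ^+ 2 <= ip x x * ip y y.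
Proof.
have [->|/ip_gt0 px] := eqVneq x 0; first by rewrite !ip0l expr0n mul0r.
(* expand [0 <= |c x - a y|^2] with [a = <x,x>], [c = <x,y>] *)
have := ip_ge0 (ip x y *: x + (- ip x x) *: y); rewrite ip_combination.
have -> : ip x y ^+ 2 * ip x x + 2 * ip x y * - ip x x * ip x y
          + (- ip x x) ^+ 2 * ip y y = ip x x * (ip x x * ip y y - ip x y ^+ 2).
  by ring.
by rewrite pmulr_rge0 // subr_ge0.
Qed.

Lemma ipnorm_ge0 x : 0 <= ipnorm ip x.
Proof. exact: sqrtr_ge0. Qed.

Lemma ipnorm0 : ipnorm ip 0 = 0.
Proof. by rewrite /ipnorm ip0l sqrtr0. Qed.

Lemma ipnorm_sq x : ipnorm ip x ^+ 2 = ip x x.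
Proof. by rewrite sqr_sqrtr ?ip_ge0. Qed.

Lemma ip_le_ipnorm x y : ip x y <= ipnorm ip x * ipnorm ip y.
Proof.
rewrite -sqrtrM ?ip_ge0 // (le_trans (ler_norm _)) //.
by rewrite -sqrtr_sqr ler_sqrt ?cauchy_schwarz // mulr_ge0 ?ip_ge0.
Qed.

Lemma ipnormD x y : ipnorm ip (x + y) <= ipnorm ip x + ipnorm ip y.
Proof.
have := ip_le_ipnorm x y; have := ipnorm_sq x; have := ipnorm_sq y.
rewrite -(ger0_norm (addr_ge0 (ipnorm_ge0 x) (ipnorm_ge0 y))) -sqrtr_sqr.
by rewrite /ipnorm ler_sqrt ?sqr_ge0 // ipD sqrrD; lra.
Qed.

Lemma ipnormZ a x : ipnorm ip (a *: x) = `|a| * ipnorm ip x.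
Proof. by rewrite /ipnorm ipZl ipZr mulrA -expr2 sqrtrM ?sqr_ge0 // sqrtr_sqr. Qed.

Lemma ip_parallelogram p q : ip p p + ip q q =
  2 * ip (2^-1 *: (p + q)) (2^-1 *: (p + q)) + 2^-1 * ip (p - q) (p - q).
Proof.
have -> : p - q = 1 *: p + (-1) *: q by rewrite scale1r scaleN1r.
by rewrite scalerDr !ip_combination; field.
Qed.

(* Young's inequality [2 <q, r> <= eta |q|^2 + eta^-1 |r|^2] applied to [p = q - r]. *)
Lemma ip_le_perturb (eta : R) p q : 0 < eta ->
  ip p p <= (1 + eta) * ip q q + (1 + eta^-1) * ip (q - p) (q - p).
Proof.
move=> eta_gt0.
have -> : p = 1 *: q + (-1) *: (q - p) by rewrite scale1r scaleN1r opprB addrC subrK.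
rewrite ip_combination opprD addrA scale1r scaleN1r opprK subrr add0r.
have := ip_ge0 (eta *: q + 1 *: (q - p)); rewrite ip_combination.
set a := ip q q; set b := ip q (q - p); set c := ip (q - p) (q - p) => h.
have c_ge0 : 0 <= c by apply: ip_ge0.
have : 0 <= eta^-1 * (eta ^+ 2 * a + 2 * eta * 1 * b + 1 ^+ 2 * c).
  by rewrite mulr_ge0 // invr_ge0 ltW.
have -> : eta^-1 * (eta ^+ 2 * a + 2 * eta * 1 * b + 1 ^+ 2 * c)
   = eta * a + 2 * b + eta^-1 * c by field; rewrite gt_eqF.
by move: (eta^-1) => ei; lra.
Qed.

End InnerProduct.

Lemma sq_coef_eq0 (R : realFieldType) (a b : R) :
  0 <= b -> (forall t, 0 <= a * t + b * t ^+ 2) -> a = 0.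
Proof.
move=> b_ge0 h; have b1_gt0 : 0 < b + 1 by lra.
(* at [t = -a/(b+1)] the quadratic times [(b+1)^2] equals [-a^2] *)
have := h (- a / (b + 1)).
rewrite -(pmulr_rge0 _ (exprn_gt0 2 b1_gt0)).
have -> : (b + 1) ^+ 2 * (a * (- a / (b + 1)) + b * (- a / (b + 1)) ^+ 2) = - a ^+ 2.
  by field; rewrite gt_eqF.
by move=> h'; apply/eqP; rewrite -sqrf_eq0 eq_le sqr_ge0 andbT -oppr_ge0.
Qed.

Lemma inv_succ_lt (R : archiRealFieldType) (e : R) : 0 < e ->
  exists n0 : nat, forall n, (n0 <= n)%N -> n.+1%:R^-1 < e.
Proof.
move=> e_gt0; have ei_gt0 : 0 < e^-1 by rewrite invr_gt0.
exists (Num.Def.archi_bound e^-1) => n n0n.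
have : e^-1 < n.+1%:R.
  by apply: lt_le_trans (archi_boundP (ltW ei_gt0)) _; rewrite ler_nat ltnW.
by move=> h; rewrite -[X in _ < X]invrK ltf_pV2 // posrE ?invr_gt0 ?ltr0Sn.
Qed.

Section OperatorNorm.
Variables (R : realType) (U V : lmodType R) (ipU : U -> U -> R) (ipV : V -> V -> R).
Hypotheses (hU : is_inner_product ipU) (hV : is_inner_product ipV).

Lemma ipnorm_le_opnorm_on (S : set V) (f : V -> U) z :
  (forall k z, S z -> S (k *: z)) -> (forall k z, f (k *: z) = k *: f z) ->
  has_ubound [set r | exists z, [/\ S z, ipnorm ipV z <= 1 & r = ipnorm ipU (f z)]] ->
  S z -> ipnorm ipU (f z) <= opnorm_on ipU ipV S f * ipnorm ipV z.
Proof.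
move=> S_scale fZ ub Sz.
have [->|z_neq0] := eqVneq z 0.
  by rewrite -(scale0r (0 : V)) fZ !scale0r (ipnorm0 hV) (ipnorm0 hU) mulr0.
set c := ipnorm ipV z.
have c_gt0 : 0 < c by rewrite sqrtr_gt0 (ip_gt0 hV).
have unit_z : ipnorm ipV (c^-1 *: z) = 1.
  by rewrite (ipnormZ hV) gtr0_norm ?invr_gt0 // mulVf ?gt_eqF.
set E := [set r | exists z, [/\ S z, ipnorm ipV z <= 1 & r = ipnorm ipU (f z)]].
have E_fz : E (ipnorm ipU (f (c^-1 *: z))).
  by exists (c^-1 *: z); split; [exact: S_scale | rewrite unit_z |].
have := sup_upper_bound (conj (ex_intro _ _ E_fz) ub) E_fz.
by rewrite fZ (ipnormZ hU) gtr0_norm ?invr_gt0 // mulrC ler_pdivrMr.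
Qed.

Lemma ipnorm_le_opnorm (A : {linear V -> U}) x : opnorm ipV ipU A != 0 ->
  ipnorm ipU (A x) <= opnorm ipV ipU A * ipnorm ipV x.
Proof.
have -> : opnorm ipV ipU A = opnorm_on ipU ipV setT A.
  by congr sup; apply/seteqP; split=> r [y] => [[]|[]]; exists y.
move=> /eqP sup_neq0; apply: ipnorm_le_opnorm_on => // [k y|]; first exact: linearZ.
by apply: contra_notP sup_neq0 => no_ub; rewrite /opnorm_on sup_out // => -[_ /no_ub].
Qed.

End OperatorNorm.

Section Tikhonov.
Variables (R : realType) (X Y : lmodType R) (ipX : X -> X -> R) (ipY : Y -> Y -> R).
Hypotheses (hX : is_inner_product ipX) (cX : ip_complete ipX).
Hypothesis hY : is_inner_product ipY.
Variables (A : {linear X -> Y}) (As : {linear Y -> X}) (M alpha : R).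
Hypothesis hadj : is_adjoint ipX ipY A As.
Hypothesis hAbd : forall x, ipnorm ipY (A x) <= M * ipnorm ipX x.
Hypothesis alpha_gt0 : 0 < alpha.

Definition tikhonov_cost (y : Y) (x : X) : R :=
  ipY (A x - y) (A x - y) + alpha * ipX x x.

Local Notation J := tikhonov_cost.
Local Notation T := (tikhonov A As alpha).

Lemma tikhonov_cost_ge0 y x : 0 <= J y x.
Proof. by rewrite addr_ge0 ?mulr_ge0 ?(ip_ge0 hX) ?(ip_ge0 hY) ?ltW. Qed.

Lemma tikhonov_cost_midpoint y p q : J y p + J y q =
  2 * J y (2^-1 *: (p + q)) +
  2^-1 * (ipY (A (p - q)) (A (p - q)) + alpha * ipX (p - q) (p - q)).
Proof.
rewrite /tikhonov_cost.
have -> : A (2^-1 *: (p + q)) - y = 2^-1 *: (A p - y + (A q - y)).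
  have y2 : 2^-1 *: (y + y) = y.
    by rewrite -mulr2n -scaler_nat scalerA mulVf ?pnatr_eq0 // scale1r.
  by rewrite linearZ linearD addrACA -opprD scalerBr y2.
have <- : A p - y - (A q - y) = A (p - q) by rewrite opprB addrA subrK linearB.
rewrite addrACA -mulrDr (ip_parallelogram hX) (ip_parallelogram hY).
by ring.
Qed.

Lemma tikhonov_cost_shift y l h t : J y (l + t *: h) = J y l +
  2 * t * ipX (As (A l - y) + alpha *: l) h +
  t ^+ 2 * (ipY (A h) (A h) + alpha * ipX h h).
Proof.
rewrite /tikhonov_cost.
have -> : A (l + t *: h) - y = 1 *: (A l - y) + t *: A h.
  by rewrite linearD linearZ scale1r addrAC.
have -> : l + t *: h = 1 *: l + t *: h by rewrite scale1r.
rewrite (ip_combination hX) (ip_combination hY).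
by rewrite (ipDl hX) (ipZl hX) (ip_sym hX (As _)) -hadj (ip_sym hY (A h)); ring.
Qed.

Lemma normal_eq_of_minimizer y l :
  (forall x, J y l <= J y x) -> As (A l) + alpha *: l = As y.
Proof.
move=> l_min; set g := As (A l - y) + alpha *: l.
have Q_ge0 : 0 <= ipY (A g) (A g) + alpha * ipX g g.
  by rewrite addr_ge0 ?mulr_ge0 ?(ip_ge0 hX) ?(ip_ge0 hY) ?ltW.
(* the minimum of [t |-> J y (l + t g)] is at [t = 0], so its slope [2 |g|^2] there vanishes *)
have /eqP : 2 * ipX g g = 0.
  apply: (sq_coef_eq0 Q_ge0) => t.
  by have := l_min (l + t *: g); rewrite tikhonov_cost_shift; lra.
rewrite mulf_eq0 pnatr_eq0 /= => /eqP/(ip_eq0 hX)/eqP.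
by rewrite /g linearB addrAC subr_eq0 => /eqP.
Qed.

Lemma normal_eq_inj a b :
  As (A a) + alpha *: a = As (A b) + alpha *: b -> a = b.
Proof.
move=> e; apply/eqP; rewrite -subr_eq0; apply/eqP/(ip_eq0 hX).
set x := a - b.
have /(congr1 (ipX^~ x)) : As (A x) + alpha *: x = 0.
  by rewrite /x (raddfB A) (raddfB As) scalerBr addrACA -opprD e subrr.
rewrite (ipDl hX) (ipZl hX) (ip0l hX) (ip_sym hX) -hadj => h.
have : alpha * ipX x x = 0.
  by have := mulr_ge0 (ltW alpha_gt0) (ip_ge0 hX x); have := ip_ge0 hY (A x); lra.
by move/eqP; rewrite mulf_eq0 gt_eqF //= => /eqP.
Qed.

Lemma ip_Ax_le x : ipY (A x) (A x) <= M ^+ 2 * ipX x x.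
Proof.
have Mx_ge0 : 0 <= M * ipnorm ipX x := le_trans (ipnorm_ge0 ipY _) (hAbd x).
by rewrite -(ipnorm_sq hY) -(ipnorm_sq hX) -exprMn ler_sqr ?nnegrE ?(ipnorm_ge0 ipY).
Qed.

Lemma tikhonov_cost_perturb y l u eta : 0 < eta ->
  J y l <= (1 + eta) * J y u + (1 + eta^-1) * (M ^+ 2 + alpha) * ipX (u - l) (u - l).
Proof.
move=> eta_gt0; have ei_ge0 : 0 <= 1 + eta^-1 by rewrite addr_ge0 ?invr_ge0 ?ltW.
have := ip_le_perturb hY (A l - y) (A u - y) eta_gt0.
have -> : A u - y - (A l - y) = A (u - l) by rewrite opprB addrA subrK linearB.
have := ler_wpM2l ei_ge0 (ip_Ax_le (u - l)).
have := ler_wpM2l (ltW alpha_gt0) (ip_le_perturb hX l u eta_gt0).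
rewrite /tikhonov_cost; lra.
Qed.

Section MinimizingSequence.
Variables (y : Y) (m : R) (u : nat -> X).
Hypothesis u_min : forall n, J y (u n) < m + n.+1%:R^-1.

Lemma minimizing_seq_cauchy : (forall x, m <= J y x) ->
  forall e : R, 0 < e -> exists n0 : nat, forall p q : nat,
    (n0 <= p)%N -> (n0 <= q)%N -> ipnorm ipX (u p - u q) < e.
Proof.
move=> m_lb e e_gt0.
have [n0 n0P] := inv_succ_lt (divr_gt0 (mulr_gt0 alpha_gt0 (exprn_gt0 2 e_gt0))
                                       (ltr0n R 4)).
exists n0 => p q n0p n0q.
rewrite /ipnorm -(ger0_norm (ltW e_gt0)) -sqrtr_sqr ltr_sqrt ?exprn_gt0 //.
rewrite -(ltr_pM2l alpha_gt0).
have := tikhonov_cost_midpoint y (u p) (u q).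
have := m_lb (2^-1 *: (u p + u q)); have := u_min p; have := u_min q.
have := n0P p n0p; have := n0P q n0q; have := ip_ge0 hY (A (u p - u q)).
move: (p.+1%:R^-1) (q.+1%:R^-1) => ep eq.
lra.
Qed.

Lemma minimizing_seq_limit l : 0 <= m ->
  (forall e : R, 0 < e -> exists n0 : nat, forall n : nat,
     (n0 <= n)%N -> ipnorm ipX (u n - l) < e) ->
  J y l <= m.
Proof.
move=> m_ge0 u_cvg; apply/ler_addgt0Pr => eps eps_gt0.
pose eta := eps / (2 * (m + 1)).
have eta_gt0 : 0 < eta by rewrite divr_gt0 // mulr_gt0 // ltr_pwDr.
have etaE : eta * (m + 1) = eps / 2 by rewrite /eta; field; rewrite gt_eqF ?ltr_pwDr.
set K := (1 + eta^-1) * (M ^+ 2 + alpha).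
have K_gt0 : 0 < K.
  by apply: mulr_gt0; [rewrite addr_gt0 ?invr_gt0 | exact: ltr_wpDl (sqr_ge0 M) _].
have dK_gt0 : 0 < eps / (4 * K) by rewrite divr_gt0 // mulr_gt0.
have sK_gt0 : 0 < Num.sqrt (eps / (4 * K)) by rewrite sqrtr_gt0.
have [n0 n0P] := u_cvg _ sK_gt0.
have [n1 n1P] := inv_succ_lt (divr_gt0 eps_gt0 (ltr0n R 4)).
pose n := maxn n0 n1.
have KD_lt : K * ipX (u n - l) (u n - l) < eps / 4.
  have -> : eps / 4 = K * (eps / (4 * K)) by field; rewrite gt_eqF.
  have := n0P n (leq_maxl _ _).
  by rewrite /ipnorm ltr_sqrt // => hD; rewrite ltr_pM2l.
have en_le1 : n.+1%:R^-1 <= 1 :> R by rewrite invf_le1 ?ler1n ?ltr0Sn.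
have := ler_wpM2l (ltW eta_gt0) en_le1; have := n1P n (leq_maxr _ _).
have := ler_wpM2l (addr_ge0 ler01 (ltW eta_gt0)) (ltW (u_min n)).
have := tikhonov_cost_perturb y l (u n) eta_gt0; rewrite -/K.
by move: (n.+1%:R^-1) => en; lra.
Qed.

End MinimizingSequence.

Lemma tikhonov_cost_has_minimizer y : exists l, forall x, J y l <= J y x.
Proof.
set E := range (J y).
have E_lb : has_lbound E by exists 0 => _ [x _ <-]; apply: tikhonov_cost_ge0.
have E_n0 : E !=set0 by exists (J y 0), 0.
have inf_le x : inf E <= J y x by apply: (ge_inf E_lb); exists x.
have inf_ge0 : 0 <= inf E.
  by apply: lb_le_inf => // _ [x _ <-]; apply: tikhonov_cost_ge0.
have [u u_min] : {u : nat -> X & forall n, J y (u n) < inf E + n.+1%:R^-1}.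
  apply: (@choice _ _ (fun n x => J y x < inf E + n.+1%:R^-1)) => n.
  have e_gt0 : 0 < n.+1%:R^-1 :> R by rewrite invr_gt0.
  by have [_ [x _ <-]] := inf_adherent e_gt0 (conj E_n0 E_lb); exists x.
have [l l_lim] := cX (minimizing_seq_cauchy u_min inf_le).
by exists l => x; apply: le_trans (inf_le x); apply: minimizing_seq_limit u_min _ _ l_lim.
Qed.

Lemma tikhonov_normal_eq y : As (A (T y)) + alpha *: T y = As y.
Proof.
apply: (epsilon_spec (inhabits 0) (fun x => As (A x) + alpha *: x = As y)).
have [l l_min] := tikhonov_cost_has_minimizer y.
by exists l; apply: normal_eq_of_minimizer.
Qed.

Lemma tikhonovE y x : As (A x) + alpha *: x = As y -> T y = x.
Proof. by move=> x_eq; apply: normal_eq_inj; rewrite tikhonov_normal_eq. Qed.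

Lemma tikhonovD y1 y2 : T (y1 + y2) = T y1 + T y2.
Proof.
apply: tikhonovE.
by rewrite (raddfD A) !(raddfD As) scalerDr addrACA !tikhonov_normal_eq.
Qed.

Lemma tikhonovZ (k : R) y : T (k *: y) = k *: T y.
Proof.
apply: tikhonovE.
by rewrite !linearZ -scalerDr tikhonov_normal_eq.
Qed.

Lemma tikhonov_range_adjoint z : T (A (As z)) = As z - alpha *: T z.
Proof.
have TzE : As z - alpha *: T z = As (A (T z)) by rewrite -tikhonov_normal_eq addrK.
apply: tikhonovE.
by rewrite !linearB !linearZ /= -TzE !scalerN scalerBr subrK.
Qed.

Lemma ipnorm_tikhonov_le w :
  ipnorm ipX (T w) <= ipnorm ipY w / (2 * Num.sqrt alpha).
Proof.
set x := T w.
have := congr1 (ipX^~ x) (tikhonov_normal_eq w).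
rewrite /= (ipDl hX) (ipZl hX) !(ip_sym hX (As _)) -!hadj => x_eq.
have := cauchy_schwarz hY (A x) w; have := ip_ge0 hY (A x); have := ip_ge0 hX x.
have := ip_ge0 hY w; move=> W_ge0 X_ge0 P_ge0 cs.
(* [|A x|^2 + alpha |x|^2 = <A x, w>] is at most [|A x| |w| <= |A x|^2 + |w|^2 / 4] *)
have key : 4 * (alpha * ipX x x) <= ipY w w.
  by have := sqr_ge0 (ipY w w - 4 * ipY (A x) (A x)); nra.
rewrite ler_pdivlMr ?mulr_gt0 ?sqrtr_gt0 //.
rewrite -ler_sqr ?nnegrE ?mulr_ge0 ?ipnorm_ge0 ?sqrtr_ge0 //.
by rewrite !exprMn !(ipnorm_sq hX, ipnorm_sq hY) (sqr_sqrtr (ltW alpha_gt0)); lra.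
Qed.

Lemma scaled_ipnorm_tikhonov_le z :
  alpha * ipnorm ipX (T z) <= Num.sqrt alpha / 2 * ipnorm ipY z.
Proof.
apply: le_trans (ler_wpM2l (ltW alpha_gt0) (ipnorm_tikhonov_le z)) _.
rewrite -[X in X * (_ / _)](sqr_sqrtr (ltW alpha_gt0)).
have sa_gt0 : 0 < Num.sqrt alpha by rewrite sqrtr_gt0.
by rewrite le_eqVlt; apply/orP; left; apply/eqP; field; rewrite gt_eqF.
Qed.

Lemma tikhonov_error_le z yd : ipnorm ipX (T yd - As z) <=
  ipnorm ipY (yd - A (As z)) / (2 * Num.sqrt alpha) + alpha * ipnorm ipX (T z).
Proof.
have -> : T yd - As z = T (yd - A (As z)) - alpha *: T z.
  have := tikhonovD (yd - A (As z)) (A (As z)); rewrite subrK => ->.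
  by rewrite tikhonov_range_adjoint addrA addrAC addrK.
apply: le_trans (ipnormD hX _ _) _.
by rewrite -scaleNr (ipnormZ hX) normrN (ger0_norm (ltW alpha_gt0)) lerD2r ipnorm_tikhonov_le.
Qed.

Lemma ipnorm_tikhonov_le_opnorm_on (S : set Y) z :
  (forall k y, S y -> S (k *: y)) -> S z ->
  ipnorm ipX (T z) <= opnorm_on ipX ipY S T * ipnorm ipY z.
Proof.
move=> S_scale Sz; apply: (ipnorm_le_opnorm_on hX hY S_scale tikhonovZ _ Sz).
have sai_ge0 : 0 <= (2 * Num.sqrt alpha)^-1 by rewrite invr_ge0 mulr_ge0 ?sqrtr_ge0.
exists (2 * Num.sqrt alpha)^-1 => _ [y [_ y_le1 ->]].
apply: le_trans (ipnorm_tikhonov_le y) _.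
by rewrite -[X in _ <= X]mul1r ler_wpM2r.
Qed.

End Tikhonov.

Lemma image_scale_closed (R : realType) (X Y : lmodType R) (f : {linear X -> Y})
    (S : set X) : (forall k x, S x -> S (k *: x)) ->
  forall k y, (f @` S) y -> (f @` S) (k *: y).
Proof. by move=> S_scale k _ [x Sx <-]; exists (k *: x); [exact: S_scale | exact: linearZ]. Qed.

Lemma subspace_dimZ (R : realType) (X : lmodType R) (XN : set X) N :
  subspace_dim XN N -> forall k x, XN x -> XN (k *: x).
Proof.
case=> b [_ ->] k _ [c ->]; exists (fun i => k * c i).
by rewrite scaler_sumr; apply: eq_bigr => i _; rewrite scalerA.
Qed.

Theorem theorem2 (R : realType) (X Y : lmodType R)
  (ipX : X -> X -> R) (ipY : Y -> Y -> R)
  (hX : is_hilbert ipX) (hY : is_hilbert ipY)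
  (A : {linear X -> Y}) (Astar : {linear Y -> X})
  (hAstar : is_adjoint ipX ipY A Astar)
  (hAcomp : compact_op ipX ipY A)
  (hAnorm : opnorm ipX ipY A = 1)
  (N : nat) (XN : set X) (hXN : subspace_dim XN N)
  (rho C : R) (hrho : 0 < rho) (hC : 0 < C)
  (xdag : X)
  (hi : XN xdag /\ exists z : Y, [/\ (A @` XN) z, ipnorm ipY z <= rho & xdag = Astar z])
  (hii : forall alpha : R, 0 < alpha -> alpha <= 1 ->
     opnorm_on ipX ipY (A @` XN) (tikhonov A Astar alpha) <= C * N%:R)
  (delta : R) (hdelta : 0 <= delta) (ydelta : Y)
  (hyd : ipnorm ipY (ydelta - A xdag) <= delta) :
  forall alpha : R, 0 < alpha -> alpha <= 1 ->
    ipnorm ipX (tikhonov A Astar alpha ydelta - xdag) <=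
      delta / (2 * Num.sqrt alpha) +
      (if (2 * C * N%:R)^-1 < Num.sqrt alpha
       then Num.sqrt alpha / 2 * rho
       else alpha * C * N%:R * rho).
Proof.
move=> alpha alpha_gt0 alpha_le1.
case: hX => hX cX; case: hY => hY _; case: hi => _ [z [ARz z_le xdagE]].
have A_neq0 : opnorm ipX ipY A != 0 by rewrite hAnorm oner_neq0.
have hAbd x := ipnorm_le_opnorm hY hX x A_neq0.
rewrite xdagE in hyd *.
apply: le_trans (tikhonov_error_le hX cX hY hAstar hAbd alpha_gt0 z ydelta) _.
apply: lerD; first by rewrite ler_wpM2r ?invr_ge0 ?mulr_ge0 ?sqrtr_ge0.
case: ifP => _.
  apply: le_trans (scaled_ipnorm_tikhonov_le hX cX hY hAstar hAbd alpha_gt0 z) _.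
  by apply: ler_wpM2l z_le; rewrite divr_ge0 ?sqrtr_ge0.
have Tz_le := ipnorm_tikhonov_le_opnorm_on hX cX hY hAstar hAbd alpha_gt0
                (image_scale_closed (f := A) (subspace_dimZ hXN)) ARz.
rewrite -!mulrA; apply: ler_wpM2l; first exact: ltW.
apply: le_trans Tz_le _; rewrite mulrA.
apply: le_trans (ler_wpM2r (ipnorm_ge0 _ _) (hii _ alpha_gt0 alpha_le1)) _.
by apply: ler_wpM2l z_le; rewrite mulr_ge0 ?ler0n ?ltW.
Qed.
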